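(* Fix a reflection matrix $\mathbf\Phi$ and let $(\{\mathbf W_k^\star\}_{k\in\mathcal K},\mathbf R_0^\star,u^\star)$ be an optimal solution of problem (SDR3.3). Define, for each $k\in\mathcal K$, $$\mathbf w_k^{\mathrm{opt,I}}=(\mathbf h_k^H\mathbf W_k^\star\mathbf h_k)^{-1/2}\,\mathbf W_k^\star\mathbf h_k,\qquad \mathbf R_0^{\mathrm{opt,I}}=\mathbf R_0^\star+\sum_{k\in\mathcal K}\mathbf W_k^\star-\sum_{k\in\mathcal K}\mathbf w_k^{\mathrm{opt,I}}(\mathbf w_k^{\mathrm{opt,I}})^H .$$ Then these are well defined, $\mathbf R_0^{\mathrm{opt,I}}\succeq\mathbf 0$, and $(\{\mathbf w_k^{\mathrm{opt,I}}\},\mathbf R_0^{\mathrm{opt,I}},u^\star)$ is an optimal solution of problem (P3.2). In particular (P3.2) and (SDR3.3) have the same optimal value.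
   Context: Let $M,N,K\ge1$ be integers and $\mathcal K=\{1,\dots,K\}$. Fixed data: $\mathbf G\in\mathbb C^{N\times M}$, $\mathbf h_{\mathrm d,k}\in\mathbb C^{M}$, $\mathbf h_{\mathrm r,k}\in\mathbb C^{N}$ ($k\in\mathcal K$), thresholds $\Gamma_k>0$, noise powers $\sigma_k^2>0$, power budget $P_0>0$, an angle $\theta$, spacing $d>0$ and wavelength $\lambda>0$. A reflection matrix is $\mathbf\Phi=\mathrm{diag}(\mathbf v)$, $\mathbf v\in\mathbb C^N$, $|v_n|=1$. For given $\mathbf\Phi$: $\mathbf h_k=\mathbf h_{\mathrm d,k}+\mathbf G^H\mathbf\Phi^H\mathbf h_{\mathrm r,k}$, $\mathbf H_k=\mathbf h_k\mathbf h_k^H$. Let $\mathbf a(\theta)\in\mathbb C^N$ have entries $e^{j2\pi (n-1)d\sin\theta/\lambda}$, $n=1,\dots,N$, and $\dot{\mathbf a}(\theta)$ its derivative in $\theta$; put $\mathbf b=\mathbf G^T\mathbf\Phi^T\mathbf a(\theta)$, $\dot{\mathbf b}=\mathbf G^T\mathbf\Phi^T\dot{\mathbf a}(\theta)$, $\mathbf B=\mathbf b\mathbf b^T$, $\dot{\mathbf B}=\dot{\mathbf b}\mathbf b^T+\mathbf b\dot{\mathbf b}^T$. For Hermitian $\mathbf R$ and $u\in\mathbb R$ let $$\mathcal M(\mathbf R,u)=\begin{bmatrix}\mathrm{tr}(\dot{\mathbf B}\mathbf R\dot{\mathbf B}^H)-u & \mathrm{tr}(\mathbf B\mathbf R\dot{\mathbf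 B}^H)\\ \mathrm{tr}(\dot{\mathbf B}\mathbf R\mathbf B^H) & \mathrm{tr}(\mathbf B\mathbf R\mathbf B^H)\end{bmatrix}$$ (when $\mathrm{tr}(\mathbf B\mathbf R\mathbf B^H)>0$, $\mathcal M(\mathbf R,u)\succeq\mathbf 0$ iff $u\le \mathrm{tr}(\dot{\mathbf B}\mathbf R\dot{\mathbf B}^H)-|\mathrm{tr}(\mathbf B\mathbf R\dot{\mathbf B}^H)|^2/\mathrm{tr}(\mathbf B\mathbf R\mathbf B^H)$, the quantity inversely proportional to the DoA CRB). Type-I SINR: $\gamma_k^{\mathrm I}=|\mathbf h_k^H\mathbf w_k|^2/(\sum_{i\ne k}|\mathbf h_k^H\mathbf w_i|^2+\mathbf h_k^H\mathbf R_0\mathbf h_k+\sigma_k^2)$. Problem (P3.2) (fixed $\mathbf\Phi$): maximize $u$ over $\mathbf w_k\in\mathbb C^M$, Hermitian $\mathbf R_0\succeq\mathbf 0$, $u\in\mathbb R$, subject to $\mathcal M(\sum_k\mathbf w_k\mathbf w_k^H+\mathbf R_0,u)\succeq\mathbf 0$, $\gamma_k^{\mathrm I}\ge\Gamma_k$ for all $k$, and $\sum_k\|\mathbf w_k\|^2+\mathrm{tr}(\mathbf R_0)\le P_0$. Problem (SDR3.3) (fixed $\mathbf\Phi$): maximize $u$ over Hermitian $\mathbf W_k\succeq\mathbf 0$, $\mathbf R_0\succeq\mathbf 0$, $u\in\mathbb R$, subject to $\mathcal M(\sum_k\mathbf W_k+\mathbf R_0,u)\succeq\mathbf 0$, $(1+\tfrac1{\Gamma_k})\mathrm{tr}(\mathbf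 H_k\mathbf W_k)-\mathrm{tr}(\mathbf H_k(\sum_i\mathbf W_i+\mathbf R_0))\ge\sigma_k^2$ for all $k$, and $\sum_k\mathrm{tr}(\mathbf W_k)+\mathrm{tr}(\mathbf R_0)\le P_0$. *)

From HB Require Import structures.
From mathcomp Require Import all_boot all_order all_algebra.
From mathcomp Require Import reals topology normedtype derive trigo.
From mathcomp Require Import complex.
Set Implicit Arguments. Unset Strict Implicit. Unset Printing Implicit Defensive.
Import Order.TTheory GRing.Theory Num.Theory.
Import numFieldNormedType.Exports.
Local Open Scope ring_scope.

Definition adjm (R : rcfType) (m n : nat) (A : 'M[R[i]]_(m, n)) : 'M[R[i]]_(n, m) :=
  (map_mx (@conjc R) A)^T.

(* Hermitian positive semidefinite: A = A^H and x^H A x >= 0 (real, nonneg) *)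
Definition psdmx (R : rcfType) (n : nat) (A : 'M[R[i]]_n) : Prop :=
  A = adjm A /\ forall x : 'cV[R[i]]_n, 0 <= (adjm x *m A *m x) 0 0.

Definition Phi (R : rcfType) (N : nat) (v : 'cV[R[i]]_N) : 'M[R[i]]_N := diag_mx v^T.

Definition chan (R : rcfType) (M N : nat) (G : 'M[R[i]]_(N, M))
  (hd : 'cV[R[i]]_M) (hr : 'cV[R[i]]_N) (v : 'cV[R[i]]_N) : 'cV[R[i]]_M :=
  hd + adjm G *m adjm (Phi v) *m hr.

(* phase of the n-th entry (0-indexed, i.e. n = paper's n - 1) of a(t) *)
Definition phase (R : realType) (d lam : R) (n : nat) (t : R) : R :=
  2 * pi * n%:R * d * sin t / lam.

Definition steer (R : realType) (N : nat) (d lam theta : R) : 'cV[R[i]]_N :=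
  \col_(n < N) Complex (cos (phase d lam n theta)) (sin (phase d lam n theta)).

Definition steer_deriv (R : realType) (N : nat) (d lam theta : R) : 'cV[R[i]]_N :=
  \col_(n < N) Complex ((derive1 (fun t : R => cos (phase d lam n t))) theta)
                       ((derive1 (fun t : R => sin (phase d lam n t))) theta).

Definition bvec (R : rcfType) (M N : nat) (G : 'M[R[i]]_(N, M)) (v : 'cV[R[i]]_N)
  (a : 'cV[R[i]]_N) : 'cV[R[i]]_M := G^T *m (Phi v)^T *m a.

Definition CRBmx (R : rcfType) (M : nat) (B Bd Rm : 'M[R[i]]_M) (u : R) : 'M[R[i]]_2 :=
  \matrix_(i < 2, j < 2)
    if val i == 0%N then
      (if val j == 0%N then \tr (Bd *m Rm *m adjm Bd) - u%:C%C else \tr (B *m Rm *m adjm Bd))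
    else
      (if val j == 0%N then \tr (Bd *m Rm *m adjm B) else \tr (B *m Rm *m adjm B)).

Definition sinr1 (R : rcfType) (M K : nat) (h : 'I_K -> 'cV[R[i]]_M)
  (sigma2 : 'I_K -> R) (w : 'I_K -> 'cV[R[i]]_M) (R0 : 'M[R[i]]_M) (k : 'I_K) : R[i] :=
  `|(adjm (h k) *m w k) 0 0| ^+ 2 /
  (\sum_(i < K | i != k) `|(adjm (h k) *m w i) 0 0| ^+ 2
   + (adjm (h k) *m R0 *m h k) 0 0 + (sigma2 k)%:C%C).

Definition P32_feasible (R : rcfType) (M K : nat) (h : 'I_K -> 'cV[R[i]]_M)
  (B Bd : 'M[R[i]]_M) (Gam sigma2 : 'I_K -> R) (P0 : R)
  (w : 'I_K -> 'cV[R[i]]_M) (R0 : 'M[R[i]]_M) (u : R) : Prop :=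
  [/\ psdmx R0,
      psdmx (CRBmx B Bd (\sum_(k < K) w k *m adjm (w k) + R0) u),
      (forall k, (Gam k)%:C%C <= sinr1 h sigma2 w R0 k) &
      \sum_(k < K) (adjm (w k) *m w k) 0 0 + \tr R0 <= P0%:C%C].

Definition P32_optimal (R : rcfType) (M K : nat) (h : 'I_K -> 'cV[R[i]]_M)
  (B Bd : 'M[R[i]]_M) (Gam sigma2 : 'I_K -> R) (P0 : R)
  (w : 'I_K -> 'cV[R[i]]_M) (R0 : 'M[R[i]]_M) (u : R) : Prop :=
  P32_feasible h B Bd Gam sigma2 P0 w R0 u /\
  forall w' R0' u', P32_feasible h B Bd Gam sigma2 P0 w' R0' u' -> u' <= u.

Definition SDR33_feasible (R : rcfType) (M K : nat) (h : 'I_K -> 'cV[R[i]]_M)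
  (B Bd : 'M[R[i]]_M) (Gam sigma2 : 'I_K -> R) (P0 : R)
  (W : 'I_K -> 'M[R[i]]_M) (R0 : 'M[R[i]]_M) (u : R) : Prop :=
  [/\ forall k, psdmx (W k),
      psdmx R0,
      psdmx (CRBmx B Bd (\sum_(k < K) W k + R0) u),
      (forall k, (sigma2 k)%:C%C <=
         (1 + (Gam k)^-1)%:C%C * \tr (h k *m adjm (h k) *m W k)
         - \tr (h k *m adjm (h k) *m (\sum_(i < K) W i + R0))) &
      \sum_(k < K) \tr (W k) + \tr R0 <= P0%:C%C].

Definition SDR33_optimal (R : rcfType) (M K : nat) (h : 'I_K -> 'cV[R[i]]_M)
  (B Bd : 'M[R[i]]_M) (Gam sigma2 : 'I_K -> R) (P0 : R)
  (W : 'I_K -> 'M[R[i]]_M) (R0 : 'M[R[i]]_M) (u : R) : Prop :=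
  SDR33_feasible h B Bd Gam sigma2 P0 W R0 u /\
  forall W' R0' u', SDR33_feasible h B Bd Gam sigma2 P0 W' R0' u' -> u' <= u.

From HB Require Import structures.
From mathcomp Require Import all_boot all_order all_algebra.
From mathcomp Require Import reals topology normedtype derive trigo.
From mathcomp Require Import complex ring.
Import Order.TTheory GRing.Theory Num.Theory.
Local Open Scope ring_scope.

(* (SDR3.3) is (P3.2) with each w_k w_k^H relaxed to a PSD matrix W_k.  For
   rank-one W_k = w_k w_k^H the SINR constraint of (P3.2) is equivalent to the
   linear constraint of (SDR3.3), so the relaxation is at least as good.
   Conversely, from an optimal W_k the beamformer w_k = W_k h_k / sqrt(h_k^H W_k h_k)
   carries the same signal power h_k^H w_k w_k^H h_k = h_k^H W_k h_k, and
   W_k - w_k w_k^H is the Schur complement of the pivot h_k^H W_k h_k, hence PSD.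
   Moving these differences into R_0 leaves the total covariance, and with it
   the CRB matrix, the interference terms and the power, unchanged. *)

Set Implicit Arguments. Unset Strict Implicit.

Section HermitianForms.
Variable R : rcfType.
Local Notation C := R[i].

Lemma adjmE m n (A : 'M[C]_(m, n)) i j : adjm A i j = (A j i)^*%C.
Proof. by rewrite /adjm !mxE. Qed.

Lemma adjmK m n (A : 'M[C]_(m, n)) : adjm (adjm A) = A.
Proof. by apply/matrixP=> i j; rewrite !adjmE conjcK. Qed.

Lemma adjmD m n (A B : 'M[C]_(m, n)) : adjm (A + B) = adjm A + adjm B.
Proof. by rewrite /adjm map_mxD linearD. Qed.

Lemma adjmB m n (A B : 'M[C]_(m, n)) : adjm (A - B) = adjm A - adjm B.
Proof. by rewrite /adjm map_mxB linearB. Qed.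

Lemma adjmZ m n a (A : 'M[C]_(m, n)) : adjm (a *: A) = a^*%C *: adjm A.
Proof. by rewrite /adjm map_mxZ linearZ. Qed.

Lemma adjmM m n p (A : 'M[C]_(m, n)) (B : 'M[C]_(n, p)) :
  adjm (A *m B) = adjm B *m adjm A.
Proof. by rewrite /adjm map_mxM trmx_mul. Qed.

Definition sesq n (x : 'cV[C]_n) (A : 'M[C]_n) (y : 'cV[C]_n) : C :=
  (adjm x *m A *m y) 0 0.

Lemma sesqD n (x y : 'cV[C]_n) A B : sesq x (A + B) y = sesq x A y + sesq x B y.
Proof. by rewrite /sesq mulmxDr mulmxDl mxE. Qed.

Lemma sesqB n (x y : 'cV[C]_n) A B : sesq x (A - B) y = sesq x A y - sesq x B y.
Proof. by rewrite /sesq mulmxBr mulmxBl !mxE. Qed.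

Lemma sesqZ n (x y : 'cV[C]_n) a A : sesq x (a *: A) y = a * sesq x A y.
Proof. by rewrite /sesq -scalemxAr -scalemxAl mxE. Qed.

Lemma sesq_sum n (x y : 'cV[C]_n) (I : Type) (r : seq I) (P : pred I) F :
  sesq x (\sum_(i <- r | P i) F i) y = \sum_(i <- r | P i) sesq x (F i) y.
Proof. by rewrite /sesq mulmx_sumr mulmx_suml summxE. Qed.

Lemma sesq0 n (x y : 'cV[C]_n) : sesq x 0 y = 0.
Proof. by rewrite /sesq mulmx0 mul0mx mxE. Qed.

Lemma sesqBl n (x y z : 'cV[C]_n) A : sesq (x - y) A z = sesq x A z - sesq y A z.
Proof. by rewrite /sesq adjmB !mulmxBl !mxE. Qed.

Lemma sesqBr n (x y z : 'cV[C]_n) A : sesq z A (x - y) = sesq z A x - sesq z A y.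
Proof. by rewrite /sesq mulmxBr !mxE. Qed.

Lemma sesqZl n (x z : 'cV[C]_n) a A : sesq (a *: x) A z = a^*%C * sesq x A z.
Proof. by rewrite /sesq adjmZ -!scalemxAl mxE. Qed.

Lemma sesqZr n (x z : 'cV[C]_n) a A : sesq z A (a *: x) = a * sesq z A x.
Proof. by rewrite /sesq -scalemxAr mxE. Qed.

Lemma conj_sesq n (x y : 'cV[C]_n) A : (sesq x A y)^*%C = sesq y (adjm A) x.
Proof. by rewrite /sesq -adjmE !adjmM adjmK mulmxA. Qed.

Lemma mul_col_row_mx00 m n (A : 'M[C]_(m, 1)) (B : 'M[C]_(1, n)) i j :
  (A *m B) i j = A i 0 * B 0 j.
Proof. by rewrite mxE big_ord1. Qed.

Lemma sesq_mul_col_row n (x y u : 'cV[C]_n) (r : 'rV[C]_n) :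
  sesq x (u *m r) y = (adjm x *m u) 0 0 * (r *m y) 0 0.
Proof. by rewrite /sesq mulmxA -(mulmxA (adjm x *m u)) mul_col_row_mx00. Qed.

Lemma sesq_outer n (x w : 'cV[C]_n) :
  sesq x (w *m adjm w) x = `|(adjm x *m w) 0 0| ^+ 2.
Proof.
by rewrite sesq_mul_col_row sqr_normc -adjmE adjmM adjmK.
Qed.

Lemma mxtrace_col_row n (x : 'cV[C]_n) (y : 'rV[C]_n) : \tr (x *m y) = (y *m x) 0 0.
Proof. by rewrite mxtrace_mulC /mxtrace big_ord1. Qed.

Lemma mxtrace_outer_mul n (h : 'cV[C]_n) A : \tr (h *m adjm h *m A) = sesq h A h.
Proof. by rewrite -mulmxA mxtrace_col_row. Qed.


Lemma psdmx0 n : psdmx (0 : 'M[C]_n).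
Proof.
split; first by rewrite /adjm map_mx0 trmx0.
by move=> x; rewrite -/(sesq x 0 x) sesq0.
Qed.

Lemma psdmxD n (A B : 'M[C]_n) : psdmx A -> psdmx B -> psdmx (A + B).
Proof.
move=> [hA A_ge0] [hB B_ge0]; split; first by rewrite adjmD -hA -hB.
by move=> x; rewrite -/(sesq x _ x) sesqD addr_ge0 // ?A_ge0 ?B_ge0.
Qed.

Lemma psdmx_sum n (I : Type) (r : seq I) (P : pred I) (F : I -> 'M[C]_n) :
  (forall i, P i -> psdmx (F i)) -> psdmx (\sum_(i <- r | P i) F i).
Proof. by move=> F_psd; apply: big_ind; [exact: psdmx0 | exact: psdmxD |]. Qed.

Lemma psdmx_outer n (w : 'cV[C]_n) : psdmx (w *m adjm w).
Proof.
split; first by rewrite adjmM adjmK.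
by move=> x; rewrite -/(sesq x _ x) sesq_outer exprn_ge0.
Qed.

(* Schur complement of the positive pivot [h^H W h]: the quadratic form of the
   difference at [x] is that of [W] at [x - (h^H W x / h^H W h) h]. *)
Lemma psdmx_sub_rank1 n (W : 'M[C]_n) (h : 'cV[C]_n) :
  psdmx W -> 0 < sesq h W h ->
  psdmx (W - (sesq h W h)^-1 *: (W *m h *m adjm h *m W)).
Proof.
move=> [hW W_ge0] a_gt0; set a := sesq h W h.
have conj_a : a^*%C = a by rewrite -[a]RRe_real ?gtr0_real // conjc_real.
split.
  by rewrite adjmB adjmZ !adjmM adjmK -hW conjc_inv conj_a !mulmxA.
move=> x; set c := sesq h W x / a.
have conj_c : c^*%C = sesq x W h / a.
  by rewrite /c rmorphM /= conj_sesq -hW conjc_inv conj_a.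
have a_neq0 : a != 0 by rewrite gt_eqF.
rewrite -/(sesq x _ x).
suff -> : sesq x (W - a^-1 *: (W *m h *m adjm h *m W)) x = sesq (x - c *: h) W (x - c *: h)
  by exact: W_ge0.
rewrite sesqB sesqZ -mulmxA sesq_mul_col_row mulmxA -/(sesq x W h) -/(sesq h W x).
by rewrite !sesqBl !sesqBr !sesqZl !sesqZr conj_c /c -/a; field.
Qed.

Definition beam n (W : 'M[C]_n) (h : 'cV[C]_n) : 'cV[C]_n :=
  ((Num.sqrt (complex.Re (sesq h W h)))^-1)%:C%C *: (W *m h).

Section Beam.
Variables (n : nat) (W : 'M[C]_n) (h : 'cV[C]_n).
Hypotheses (W_psd : psdmx W) (signal_gt0 : 0 < sesq h W h).

Lemma beam_outer :
  beam W h *m adjm (beam W h) = (sesq h W h)^-1 *: (W *m h *m adjm h *m W).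
Proof.
rewrite /beam adjmZ adjmM -W_psd.1 conjc_real -scalemxAl -scalemxAr scalerA !mulmxA.
congr (_ *: _); rewrite -rmorphM -expr2 exprVn sqr_sqrtr; last first.
  by move: signal_gt0; rewrite ltcE => /andP[_ /ltW].
by rewrite /= fmorphV; congr (_^-1); exact: RRe_real (gtr0_real signal_gt0).
Qed.

Lemma sesq_beam_outer : sesq h (beam W h *m adjm (beam W h)) h = sesq h W h.
Proof.
rewrite beam_outer sesqZ -mulmxA sesq_mul_col_row mulmxA.
by rewrite mulrA mulVf ?mul1r ?gt_eqF.
Qed.

Lemma psdmx_sub_beam_outer : psdmx (W - beam W h *m adjm (beam W h)).
Proof. by rewrite beam_outer; exact: psdmx_sub_rank1. Qed.

End Beam.
End HermitianForms.

Lemma ler_sinr (F : numFieldType) (g S I s : F) : 0 < g -> 0 < I + s ->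
  (g <= S / (I + s)) = (s <= (1 + g^-1) * S - (S + I)).
Proof.
move=> g_gt0 den_gt0; rewrite ler_pdivlMr // -subr_ge0 -[s <= _]subr_ge0.
have -> : (1 + g^-1) * S - (S + I) - s = g^-1 * (S - g * (I + s)).
  by field; rewrite gt_eqF.
by rewrite pmulr_rge0 ?invr_gt0 // mulrC.
Qed.

Lemma ltr0c (R : rcfType) (r : R) : (0 < r%:C%C :> R[i]) = (0 < r).
Proof. by rewrite ltcE /= eqxx. Qed.

Section Relaxation.
Variable R : rcfType.
Local Notation C := R[i].
Variables (M K : nat) (h : 'I_K -> 'cV[C]_M) (B Bd : 'M[C]_M).
Variables (Gam sigma2 : 'I_K -> R) (P0 : R).
Hypotheses (Gam_gt0 : forall k, 0 < Gam k) (sigma2_gt0 : forall k, 0 < sigma2 k).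

Local Notation P32_feasible := (P32_feasible h B Bd Gam sigma2 P0).
Local Notation SDR33_feasible := (SDR33_feasible h B Bd Gam sigma2 P0).

Lemma sinr1_geE (w : 'I_K -> 'cV[C]_M) R0 k : psdmx R0 ->
  ((Gam k)%:C%C <= sinr1 h sigma2 w R0 k) =
  ((sigma2 k)%:C%C <= (1 + (Gam k)^-1)%:C%C * \tr (h k *m adjm (h k) *m (w k *m adjm (w k)))
     - \tr (h k *m adjm (h k) *m (\sum_(i < K) w i *m adjm (w i) + R0))).
Proof.
move=> [_ R0_ge0].
rewrite !mxtrace_outer_mul sesqD sesq_sum sesq_outer.
under eq_bigr do rewrite sesq_outer.
rewrite (bigD1 k) //= -addrA rmorphD rmorph1 fmorphV /=.
apply: ler_sinr; first by rewrite ltr0c.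
apply: ltr_wpDl; last by rewrite ltr0c.
by rewrite addr_ge0 ?R0_ge0 ?sumr_ge0 // => i _; rewrite exprn_ge0.
Qed.



Lemma P32_feasible_outer w R0 u :
  P32_feasible w R0 u <-> SDR33_feasible (fun k => w k *m adjm (w k)) R0 u.
Proof.
have tr_outer k : \tr (w k *m adjm (w k)) = (adjm (w k) *m w k) 0 0.
  exact: mxtrace_col_row.
split=> [[R0_psd CRB_psd sinr_ge power_le] | [_ R0_psd CRB_psd sdr_ge power_le]].
  split=> [k|//|//|k|]; first exact: psdmx_outer.
  - by rewrite -sinr1_geE.
  - by under eq_bigr => k _ do rewrite tr_outer.
split=> [//|//|k|]; first by rewrite sinr1_geE.
by under eq_bigr => k _ do rewrite -tr_outer.
Qed.

Lemma SDR33_feasible_transfer W R0 W' R0' u :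
  SDR33_feasible W R0 u -> (forall k, psdmx (W' k)) -> psdmx R0' ->
  \sum_(k < K) W' k + R0' = \sum_(k < K) W k + R0 ->
  (forall k, sesq (h k) (W' k) (h k) = sesq (h k) (W k) (h k)) ->
  SDR33_feasible W' R0' u.
Proof.
move=> [_ _ CRB_psd sdr_ge power_le] W'_psd R0'_psd total_eq signal_eq.
split=> [|||k|].
- exact: W'_psd.
- exact: R0'_psd.
- by rewrite total_eq.
- by rewrite total_eq !mxtrace_outer_mul signal_eq -!mxtrace_outer_mul.
- by rewrite -raddf_sum -mxtraceD total_eq mxtraceD raddf_sum.
Qed.

Lemma SDR33_signal_gt0 W R0 u :
  SDR33_feasible W R0 u -> forall k, 0 < sesq (h k) (W k) (h k).
Proof.
move=> [W_psd R0_psd _ sdr_ge _] k.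
have [_ total_ge0] : psdmx (\sum_(i < K) W i + R0).
  by apply: psdmxD R0_psd; apply: psdmx_sum => i _; exact: W_psd.
have : 0 < (1 + (Gam k)^-1)%:C%C * sesq (h k) (W k) (h k).
  apply: (lt_le_trans _ (le_trans (sdr_ge k) _)); first by rewrite ltr0c.
  by rewrite !mxtrace_outer_mul gerBl total_ge0.
by rewrite pmulr_rgt0 // ltr0c addr_gt0 ?invr_gt0.
Qed.
End Relaxation.

Theorem proposition6 (R : realType) (M N K : nat)
  (hM : (0 < M)%N) (hN : (0 < N)%N) (hK : (0 < K)%N)
  (G : 'M[R[i]]_(N, M)) (hd : 'I_K -> 'cV[R[i]]_M) (hr : 'I_K -> 'cV[R[i]]_N)
  (Gam sigma2 : 'I_K -> R) (P0 theta d lam : R)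
  (hGam : forall k, 0 < Gam k) (hsigma2 : forall k, 0 < sigma2 k) (hP0 : 0 < P0)
  (hd_pos : 0 < d) (hlam : 0 < lam)
  (v : 'cV[R[i]]_N) (hv : forall n, `|v n 0| = 1)
  (Wst : 'I_K -> 'M[R[i]]_M) (R0st : 'M[R[i]]_M) (ust : R) :
  let h := fun k => chan G (hd k) (hr k) v in
  let b := bvec G v (steer N d lam theta) in
  let bd := bvec G v (steer_deriv N d lam theta) in
  let B := b *m b^T in
  let Bd := bd *m b^T + b *m bd^T in
  SDR33_optimal h B Bd Gam sigma2 P0 Wst R0st ust ->
  (forall k, 0 < (adjm (h k) *m Wst k *m h k) 0 0) /\
  let wopt := fun k =>
    ((Num.sqrt (complex.Re ((adjm (h k) *m Wst k *m h k) 0 0)))^-1)%:C%C *: (Wst k *m h k) in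
  let R0opt := R0st + \sum_(k < K) Wst k - \sum_(k < K) wopt k *m adjm (wopt k) in
  psdmx R0opt /\ P32_optimal h B Bd Gam sigma2 P0 wopt R0opt ust.
Proof.
move=> h b bd B Bd [SDR_feas SDR_opt].
have signal_gt0 := SDR33_signal_gt0 hGam hsigma2 SDR_feas.
split=> [|wopt R0opt]; first exact: signal_gt0.
have [W_psd R0_psd _ _ _] := SDR_feas.
have R0opt_psd : psdmx R0opt.
  rewrite /R0opt -addrA -sumrB; apply: psdmxD R0_psd _.
  by apply: psdmx_sum => k _; exact: psdmx_sub_beam_outer.
have wopt_feas : P32_feasible h B Bd Gam sigma2 P0 wopt R0opt ust.
  apply/(P32_feasible_outer _ _ _ _ hGam hsigma2); apply: (SDR33_feasible_transfer SDR_feas).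
  - by move=> k; exact: psdmx_outer.
  - exact: R0opt_psd.
  - by rewrite /R0opt addrC subrK addrC.
  - by move=> k; exact: sesq_beam_outer.
split; [exact: R0opt_psd | split; first exact: wopt_feas].
by move=> w' R0' u' /(P32_feasible_outer _ _ _ _ hGam hsigma2); exact: SDR_opt.
Qed.
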